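(* Let $\mathcal X$ be finite, $P_0,P_1$ distributions on $\mathcal X$ with full support, $\gamma>0$ and $\alpha>0$. Define $$\theta_0^{\rm dist}=\frac2\alpha\max_{Q:\,D(Q\|P_0)=\gamma}\mathrm{Var}_{P_0}\Big(\frac{Q(X)}{P_0(X)}\Big),\qquad \theta_0^{\rm adv}=\frac2\alpha\max_{\hat Q:\,D(\hat Q\|P_0)=\gamma}\mathrm{Var}_{\hat Q}\Big(\log\frac{\hat Q(X)}{P_0(X)}\Big).$$ Then $\theta_0^{\rm adv}\le\theta_0^{\rm dist}$.
   Context: $D$ is relative entropy. $\theta_0^{\rm dist}$ is the sensitivity of the type-I error exponent of Hoeffding's generalized likelihood ratio test (decide 1 iff the observation type $\hat T$ satisfies $D(\hat T\|P_0)\ge\gamma$) to mismatch in the test distribution within a divergence ball, and $\theta_0^{\rm adv}$ its sensitivity to adversarial perturbation of the observation type within a divergence ball; $\alpha$ is the order of the Rényi divergence or $f''(1)$ for the $f$-divergence used to define the balls. *)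

From HB Require Import structures.
From mathcomp Require Import all_boot all_order all_algebra.
From mathcomp Require Import all_classical all_reals all_analysis.
Set Implicit Arguments. Unset Strict Implicit. Unset Printing Implicit Defensive.
Import Order.TTheory GRing.Theory Num.Theory.
Local Open Scope classical_set_scope.
Local Open Scope ring_scope.

Definition is_dist (R : realType) (X : finType) (P : {ffun X -> R}) : Prop :=
  (forall x, 0 <= P x) /\ \sum_(x : X) P x = 1.

Definition full_support (R : realType) (X : finType) (P : {ffun X -> R}) : Prop :=
  forall x, 0 < P x.

Definition relent (R : realType) (X : finType) (Q P : {ffun X -> R}) : R :=
  \sum_(x : X) (if Q x == 0 then 0 else Q x * ln (Q x / P x)).

Definition expect (R : realType) (X : finType) (P : {ffun X -> R}) (g : X -> R) : R :=
  \sum_(x : X) P x * g x.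

Definition variance (R : realType) (X : finType) (P : {ffun X -> R}) (g : X -> R) : R :=
  \sum_(x : X) P x * (g x - expect P g) ^+ 2.

Definition theta_dist (R : realType) (X : finType) (P0 : {ffun X -> R}) (gamma alpha : R) : R :=
  2 / alpha * sup [set v | exists Q : {ffun X -> R},
     [/\ is_dist Q, relent Q P0 = gamma & v = variance P0 (fun x => Q x / P0 x)]].

Definition theta_adv (R : realType) (X : finType) (P0 : {ffun X -> R}) (gamma alpha : R) : R :=
  2 / alpha * sup [set v | exists Q : {ffun X -> R},
     [/\ is_dist Q, relent Q P0 = gamma & v = variance Q (fun x => ln (Q x / P0 x))]].

From Pilot Require Import Defs.
From HB Require Import structures.
From mathcomp Require Import all_boot all_order all_algebra.
From mathcomp Require Import all_classical all_reals all_analysis.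
From mathcomp Require Import lra ring.
Set Implicit Arguments. Unset Strict Implicit. Unset Printing Implicit Defensive.
Import Order.TTheory GRing.Theory Num.Theory.
Local Open Scope classical_set_scope.
Local Open Scope ring_scope.

(* Write r = Q / P0.  For every admissible Q,
     Var_Q(ln r) <= E_Q[(ln r)^2] = E_P0[r (ln r)^2] <= E_P0[(r - 1)^2] = Var_P0(r),
   by the pointwise inequality r (ln r)^2 <= (r - 1)^2.  With r = s^2 this reads
   |2 s ln s| <= |s^2 - 1|, which holds because s^2 - 1 - 2 s ln s vanishes at 1 and
   is nondecreasing on (0, +oo) (its derivative is 2 (s - 1 - ln s) >= 0).  Both
   suprema range over the same set of Q, and Var_P0(r) <= sum_x 1/P0(x), so the
   termwise comparison passes to the suprema. *)

Section LogInequality.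
Variable R : realType.
Implicit Types t x y r : R.

Lemma ln_le_subr1 y : 0 < y -> ln y <= y - 1.
Proof. by move=> y0; have := @le_ln1Dx R (y - 1); rewrite addrCA subrr addr0; apply; lra. Qed.

Lemma is_derive_sqr_sub1_mul_ln t : 0 < t ->
  is_derive t 1 (fun t => t ^+ 2 - 1 - 2 * t * ln t) (2 * (t - 1 - ln t)).
Proof.
move=> t0.
have -> : (fun t => t ^+ 2 - 1 - 2 * t * ln t) =
    ((id : R -> R) * id - cst 1 - (2 *: (id : R -> R)) * (@ln R))%R.
  by apply/funext => u /=; rewrite expr2.
have ln_derive := is_derive1_ln t0.
apply: is_derive_eq.
change (t * 1 + t * 1 - 0 - ((2 * t) * t^-1 + ln t * (2 * 1)) = 2 * (t - 1 - ln t)).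
by rewrite mulfK ?gt_eqF //; ring.
Qed.

Lemma sqr_sub1_mul_ln_ndecr x y : 0 < x -> x <= y ->
  x ^+ 2 - 1 - 2 * x * ln x <= y ^+ 2 - 1 - 2 * y * ln y.
Proof.
move=> x0 xy.
have pos_of z : x <= z -> 0 < z by apply: lt_le_trans.
apply: (@ger0_derive1_ndecr _ (fun t => t ^+ 2 - 1 - 2 * t * ln t) x y) => //.
- move=> z; rewrite in_itv/= => /andP[/ltW/pos_of z0 _].
  by apply: ex_derive; apply: is_derive_sqr_sub1_mul_ln.
- move=> z; rewrite in_itv/= => /andP[/ltW/pos_of z0 _].
  have fd := is_derive_sqr_sub1_mul_ln z0; rewrite derive1E derive_val.
  have := ln_le_subr1 z0; lra.
- apply: derivable_within_continuous => z; rewrite in_itv/= => /andP[/pos_of z0 _].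
  by apply: ex_derive; apply: is_derive_sqr_sub1_mul_ln.
Qed.

Lemma mul_sqr_ln_le r : 0 <= r -> r * ln r ^+ 2 <= (r - 1) ^+ 2.
Proof.
rewrite le_eqVlt => /predU1P[<-|r0]; first by rewrite mul0r sub0r sqrrN expr1n.
pose s := Num.sqrt r.
have s0 : 0 < s by rewrite sqrtr_gt0.
have rE : r = s ^+ 2 by rewrite sqr_sqrtr // ltW.
have -> : r * ln r ^+ 2 = (2 * s * ln s) ^+ 2 by rewrite rE lnXn // mulr2n; ring.
rewrite rE.
have f1 : 1 ^+ 2 - 1 - 2 * 1 * ln 1 = 0 :> R by rewrite ln1; ring.
have [s1|s1] := leP 1 s.
- have := sqr_sub1_mul_ln_ndecr ltr01 s1; rewrite f1.
  have : 0 <= 2 * s * ln s by rewrite mulr_ge0 ?ln_ge0 // mulr_ge0 // ltW.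
  nra.
- have := sqr_sub1_mul_ln_ndecr s0 (ltW s1); rewrite f1.
  have : 2 * s * ln s <= 0 by rewrite pmulr_rle0 ?mulr_gt0 // ln_le0 // ltW.
  nra.
Qed.

End LogInequality.

Section Variance.
Variables (R : realType) (X : finType).
Implicit Types (P Q : {ffun X -> R}) (g : X -> R).

Lemma variance_le_second_moment P g : \sum_x P x = 1 ->
  Defs.variance P g <= \sum_x P x * g x ^+ 2.
Proof.
move=> P1; rewrite /Defs.variance; set E := Defs.expect P g.
have -> : \sum_x P x * (g x - E) ^+ 2 =
    \sum_x P x * g x ^+ 2 - E *+ 2 * \sum_x P x * g x + E ^+ 2 * \sum_x P x.
  rewrite !mulr_sumr -sumrB -big_split /=.
  by apply: eq_bigr => x _; ring.
by rewrite -/(Defs.expect P g) -/E P1 mulr1; nra.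
Qed.

Lemma expect_ratio P Q : full_support P -> \sum_x Q x = 1 ->
  Defs.expect P (fun x => Q x / P x) = 1.
Proof.
move=> Ppos <-; apply: eq_bigr => x _.
by rewrite mulrC divfK // gt_eqF.
Qed.

Lemma dist_le1 Q x : is_dist Q -> Q x <= 1.
Proof.
move=> [Q0 <-]; rewrite (bigD1 x) //= lerDl.
exact: sumr_ge0.
Qed.

Lemma variance_log_ratio_le P Q : full_support P -> is_dist Q ->
  Defs.variance Q (fun x => ln (Q x / P x)) <= Defs.variance P (fun x => Q x / P x).
Proof.
move=> Ppos [Q0 Q1].
rewrite {2}/Defs.variance expect_ratio //.
apply: le_trans (variance_le_second_moment _ Q1) _.
apply: ler_sum => x _.
have QE : Q x = P x * (Q x / P x) by rewrite mulrC divfK // gt_eqF.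
rewrite {1}QE -mulrA ler_pM2l //.
by apply: mul_sqr_ln_le; rewrite divr_ge0 // ltW.
Qed.

Lemma variance_ratio_le P Q : full_support P -> is_dist P -> is_dist Q ->
  Defs.variance P (fun x => Q x / P x) <= \sum_x (P x)^-1.
Proof.
move=> Ppos [_ P1] Qd.
apply: le_trans (variance_le_second_moment _ P1) _.
apply: ler_sum => x _.
have Q0 : 0 <= Q x by case: Qd.
have Px0 : P x != 0 by rewrite gt_eqF.
have -> : P x * (Q x / P x) ^+ 2 = Q x ^+ 2 * (P x)^-1 by field.
apply: ler_piMl; first by rewrite invr_ge0 ltW.
by rewrite expr_le1 // dist_le1.
Qed.

End Variance.

Lemma le_sup_image (R : realType) (T : Type) (S : set T) (f g : T -> R) :
  (forall t, S t -> f t <= g t) -> has_ubound (g @` S) ->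
  sup (f @` S) <= sup (g @` S).
Proof.
move=> fg gS.
have [->|/set0P[t St]] := eqVneq S set0; first by rewrite !image_set0.
apply: ge_sup; first by exists (f t), t.
move=> _ [u Su <-]; apply: le_trans (fg u Su) _.
by apply: ub_le_sup => //; exists u.
Qed.

Lemma constrained_image (T U : Type) (A B : T -> Prop) (f : T -> U) :
  [set v | exists t, [/\ A t, B t & v = f t]] = f @` [set t | A t /\ B t].
Proof.
apply/seteqP; split=> v; first by move=> [t [At Bt ->]]; exists t.
by move=> [t [At Bt] <-]; exists t.
Qed.

Theorem corollary4 (R : realType) (X : finType) (P0 P1 : {ffun X -> R})
  (gamma alpha : R) :
  is_dist P0 -> is_dist P1 -> full_support P0 -> full_support P1 ->
  0 < gamma -> 0 < alpha ->
  theta_adv P0 gamma alpha <= theta_dist P0 gamma alpha.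
Proof.
move=> P0d _ P0pos _ _ alpha0.
rewrite /theta_adv /theta_dist !constrained_image.
apply: ler_wpM2l; first by rewrite divr_ge0 // ltW.
apply: le_sup_image => [Q [Qd _]|]; first exact: variance_log_ratio_le.
exists (\sum_x (P0 x)^-1) => _ [Q [Qd _] <-].
exact: variance_ratio_le.
Qed.
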